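(* Let $(A,[\cdot,\cdot])$ be a Malcev algebra, $(V,\rho)$ a representation of $A$, and $T:V\to A$ a linear map. Then $T$ is an $\mathcal{O}$-operator of $A$ associated to $\rho$ if and only if $r=T-\sigma(T)$ is a skew-symmetric solution of the Malcev Yang-Baxter equation in the Malcev algebra $A\ltimes_{\rho^*}V^*$.
   Context: Field $\mathbb{K}$ of characteristic zero, finite-dimensional spaces. A Malcev algebra is a vector space with an anti-symmetric bracket satisfying $J(x,y,[x,z])=[J(x,y,z),x]$, $J(x,y,z)=[[x,y],z]+[[z,x],y]+[[y,z],x]$. A representation of $A$ on $V$ is a linear map $\rho:A\to\mathrm{End}(V)$ with $\rho([[x,y],z])=\rho(x)\rho(y)\rho(z)-\rho(z)\rho(x)\rho(y)+\rho(y)\rho([z,x])-\rho([y,z])\rho(x)$. Its dual $\rho^*:A\to\mathrm{End}(V^* )$ is $\langle\rho^*(x)a^*,b\rangle=-\langle a^*,\rho(x)b\rangle$, again a representation. $A\ltimes_{\rho^*}V^*$ denotes $A\oplus V^*$ with bracket $[x+a^*,y+b^*]=[x,y]+\rho^*(x)b^*-\rho^*(y)a^*$ (a Malcev algebra). A linear map $T:V\to A$ is an $\mathcal{O}$-operator associated to $\rho$ if $[T(a),T(b)]=T(\rho(T(a))b-\rho(T(b))a)$ for all $a,b\in V$. Via $\mathrm{Hom}(V,A)\cong A\otimes V^*$, $T$ is identified with $\sum_i T(v_i)\otimes v_i^*\in (A\ltimes_{\rho^*}V^* )^{\otimes 2}$ for a basis $\{v_i\}$ of $V$ with dual basis $\{v_i^*\}$,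 and $\sigma(T)=\sum_i v_i^*\otimes T(v_i)$. For $r=\sum_i x_i\otimes y_i$ in $L\otimes L$ ($L$ a Malcev algebra), $r$ solves the Malcev Yang-Baxter equation if $\sum_{i,j}[x_i,x_j]\otimes y_i\otimes y_j+\sum_{i,j}x_i\otimes[y_i,x_j]\otimes y_j+\sum_{i,j}x_i\otimes x_j\otimes[y_i,y_j]=0$; skew-symmetric means $r=-\sigma(r)$. *)

(* Finite-dimensional spaces are modelled in coordinates:
   A = K^n (column vectors 'cV[K]_n), V = K^m ('cV[K]_m), V^* = K^m with the
   pairing <a*, b> = a*^T b, and A ⋉ V^* = K^(n+m) via col_mx. *)
From mathcomp Require Import all_boot all_algebra.
Set Implicit Arguments. Unset Strict Implicit. Unset Printing Implicit Defensive.
Import GRing.Theory.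
Local Open Scope ring_scope.

Section MalcevDefs.
Variable K : fieldType.

Definition jacobiator {N : nat} (br : 'cV[K]_N -> 'cV[K]_N -> 'cV[K]_N)
  (x y z : 'cV[K]_N) : 'cV[K]_N :=
  br (br x y) z + br (br z x) y + br (br y z) x.

Definition bilinear_bracket {N : nat} (br : 'cV[K]_N -> 'cV[K]_N -> 'cV[K]_N) : Prop :=
  (forall (a : K) x y z, br (a *: x + y) z = a *: br x z + br y z) /\
  (forall (a : K) x y z, br x (a *: y + z) = a *: br x y + br x z).

Definition malcev_algebra {N : nat} (br : 'cV[K]_N -> 'cV[K]_N -> 'cV[K]_N) : Prop :=
  [/\ bilinear_bracket br,
      (forall x y, br x y = - br y x) &
      (forall x y z, jacobiator br x y (br x z) = br (jacobiator br x y z) x)].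

Definition malcev_rep {n m : nat} (br : 'cV[K]_n -> 'cV[K]_n -> 'cV[K]_n)
  (rho : 'cV[K]_n -> 'M[K]_m) : Prop :=
  (forall (a : K) x y, rho (a *: x + y) = a *: rho x + rho y) /\
  (forall x y z, rho (br (br x y) z) =
     rho x *m rho y *m rho z - rho z *m rho x *m rho y
     + rho y *m rho (br z x) - rho (br y z) *m rho x).

Definition pairing {m : nat} (a : 'cV[K]_m) (b : 'cV[K]_m) : K := (a^T *m b) 0 0.

(* dual representation: <rho^*(x) a, b> = - <a, rho(x) b>, i.e. rho^*(x) = -(rho x)^T *)
Definition dual_rep {n m : nat} (rho : 'cV[K]_n -> 'M[K]_m) (x : 'cV[K]_n) : 'M[K]_m :=
  - (rho x)^T.

Definition semidirect_bracket {n m : nat} (br : 'cV[K]_n -> 'cV[K]_n -> 'cV[K]_n)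
  (rho : 'cV[K]_n -> 'M[K]_m) (u v : 'cV[K]_(n + m)) : 'cV[K]_(n + m) :=
  col_mx (br (usubmx u) (usubmx v))
         (dual_rep rho (usubmx u) *m dsubmx v - dual_rep rho (usubmx v) *m dsubmx u).

Definition O_operator {n m : nat} (br : 'cV[K]_n -> 'cV[K]_n -> 'cV[K]_n)
  (rho : 'cV[K]_n -> 'M[K]_m) (T : 'M[K]_(n, m)) : Prop :=
  forall a b : 'cV[K]_m,
    br (T *m a) (T *m b) = T *m (rho (T *m a) *m b - rho (T *m b) *m a).

(* tensors: L ⊗ L = N x N matrices, x ⊗ y = x y^T ; L ⊗ L ⊗ L = functions on triples *)
Definition tens2 {N : nat} (x y : 'cV[K]_N) : 'M[K]_N := x *m y^T.
Definition tens3 {N : nat} (x y z : 'cV[K]_N) : {ffun 'I_N * 'I_N * 'I_N -> K} :=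
  [ffun p => x p.1.1 0 * y p.1.2 0 * z p.2 0].

(* the tensor r = sum_i x_i ⊗ y_i given by the list of pairs (x_i, y_i) *)
Definition tensor_of {N : nat} (rs : seq ('cV[K]_N * 'cV[K]_N)) : 'M[K]_N :=
  \sum_(p <- rs) tens2 p.1 p.2.

Definition tswap {N : nat} (rs : seq ('cV[K]_N * 'cV[K]_N)) :=
  [seq (p.2, p.1) | p <- rs].

Definition skew_symmetric {N : nat} (rs : seq ('cV[K]_N * 'cV[K]_N)) : Prop :=
  tensor_of rs = - tensor_of (tswap rs).

Definition MYBE {N : nat} (br : 'cV[K]_N -> 'cV[K]_N -> 'cV[K]_N)
  (rs : seq ('cV[K]_N * 'cV[K]_N)) : Prop :=
  \sum_(p <- rs) \sum_(q <- rs) tens3 (br p.1 q.1) p.2 q.2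
  + \sum_(p <- rs) \sum_(q <- rs) tens3 p.1 (br p.2 q.1) q.2
  + \sum_(p <- rs) \sum_(q <- rs) tens3 p.1 q.1 (br p.2 q.2) = 0.

Definition inA {n m : nat} (x : 'cV[K]_n) : 'cV[K]_(n + m) := col_mx x 0.
Definition inVd {n m : nat} (a : 'cV[K]_m) : 'cV[K]_(n + m) := col_mx 0 a.

(* standard basis v_i of V; its dual basis v_i^* has the same coordinates
   under the pairing a^T b *)
Definition basisV {m : nat} (i : 'I_m) : 'cV[K]_m := delta_mx i 0.

(* T = sum_i T(v_i) ⊗ v_i^*  *)
Definition O_tensor {n m : nat} (T : 'M[K]_(n, m)) : seq ('cV[K]_(n + m) * 'cV[K]_(n + m)) :=
  [seq (inA (T *m basisV i), inVd (basisV i)) | i <- enum 'I_m].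

(* r = T - sigma(T) = sum_i T(v_i) ⊗ v_i^* - sum_i v_i^* ⊗ T(v_i) *)
Definition r_of {n m : nat} (T : 'M[K]_(n, m)) : seq ('cV[K]_(n + m) * 'cV[K]_(n + m)) :=
  O_tensor T ++ [seq (- p.1, p.2) | p <- tswap (O_tensor T)].

End MalcevDefs.

(* Let R be the matrix of r = T - sigma(T) on A + V^*.  Skew-symmetry of r is
   automatic, and for a skew R the (u, v, w) coordinate of the Malcev
   Yang-Baxter tensor is [R_v, R_w]_u - [R_u, R_w]_v + [R_u, R_v]_w, where R_u is
   the u-th column of R.  The columns of R indexed by V^* are the T(v_a) in A,
   those indexed by A lie in V^*, and [V^*, V^*] = 0, [A, V^*] <= V^*.  Hence a
   coordinate can be nonzero only when exactly one of u, v, w indexes A, and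
   then it is +- the c-th coordinate of
   [T v_a, T v_b] - T (rho(T v_a) v_b - rho(T v_b) v_a),
   which vanishes on basis vectors iff T is an O-operator, by bilinearity. *)

From HB Require Import structures.
From mathcomp Require Import all_boot all_algebra.
From mathcomp Require Import ring.
Set Implicit Arguments. Unset Strict Implicit. Unset Printing Implicit Defensive.
Import GRing.Theory.
Local Open Scope ring_scope.

Section LinearMaps.
Variables (R : pzRingType) (U V : lmodType R) (f : U -> V).
Hypothesis f_lin : linear f.

Let F : {linear U -> V} := HB.pack f (GRing.isLinear.Build _ _ _ _ f f_lin).

Lemma lin_fun0 : f 0 = 0.
Proof. exact: (linear0 F). Qed.

Lemma lin_funN x : f (- x) = - f x.
Proof. exact: (linearN F). Qed.

Lemma lin_fun_comb I (r : seq I) (c : I -> R) (x : I -> U) :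
  f (\sum_(i <- r) c i *: x i) = \sum_(i <- r) c i *: f (x i).
Proof.
transitivity (\sum_(i <- r) f (c i *: x i)); first exact: (linear_sum F).
by apply: eq_bigr => i _; exact: (linearZZ F).
Qed.

End LinearMaps.

Section ColumnVectors.
Variable R : pzRingType.

Lemma addmxE p q (A B : 'M[R]_(p, q)) i j : (A + B) i j = A i j + B i j.
Proof. by rewrite mxE. Qed.

Lemma oppmxE p q (A : 'M[R]_(p, q)) i j : (- A) i j = - A i j.
Proof. by rewrite mxE. Qed.

Lemma col_sum_delta p (x : 'cV[R]_p) : x = \sum_i x i 0 *: delta_mx i 0.
Proof. by rewrite {1}[x]matrix_sum_delta; apply: eq_bigr => i _; rewrite big_ord1. Qed.

Lemma sum_delta_mx_scale (V : lmodType R) p (f : 'I_p -> V) a :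
  \sum_i (delta_mx i 0 : 'cV[R]_p) a 0 *: f i = f a.
Proof.
rewrite (bigD1 a) //= mxE !eqxx scale1r big1 ?addr0 // => i.
by rewrite mxE eq_sym => /negbTE ->; rewrite scale0r.
Qed.

Lemma lin_fun_eq0_delta (V : lmodType R) p (f : 'cV[R]_p -> V) :
  linear f -> (forall i, f (delta_mx i 0) = 0) -> forall x, f x = 0.
Proof.
move=> f_lin f_e x; rewrite [x]col_sum_delta lin_fun_comb //.
by rewrite big1 // => i _; rewrite f_e scaler0.
Qed.

End ColumnVectors.

Lemma mulmx_tr_row (R : comPzRingType) p q r (A : 'M[R]_(p, q)) (B : 'M[R]_(q, r))
    c a :
  (B^T *m (row c A)^T) a 0 = (A *m B) c a.
Proof. by rewrite -trmx_mul -row_mul !mxE. Qed.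

Section Tensors.
Variables (K : fieldType) (N : nat).
Implicit Types rs : seq ('cV[K]_N * 'cV[K]_N).

Lemma tensor_of_tswap rs : tensor_of (tswap rs) = (tensor_of rs)^T.
Proof.
rewrite /tensor_of big_map linear_sum /=.
by apply: eq_bigr => p _; rewrite /tens2 trmx_mul trmxK.
Qed.

Lemma col_tensor_of rs v : col v (tensor_of rs) = \sum_(p <- rs) p.2 v 0 *: p.1.
Proof.
apply/matrixP => i j; rewrite /tensor_of !mxE !summxE; apply: eq_bigr => p _.
by rewrite [j]ord1 !mxE big_ord1 !mxE mulrC.
Qed.

Lemma row_tensor_of rs u : (row u (tensor_of rs))^T = \sum_(p <- rs) p.1 u 0 *: p.2.
Proof. by rewrite tr_row -tensor_of_tswap col_tensor_of big_map. Qed.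

End Tensors.

Section BilinearBracket.
Variables (K : fieldType) (N : nat) (br : 'cV[K]_N -> 'cV[K]_N -> 'cV[K]_N).
Hypothesis br_bilin : bilinear_bracket br.
Implicit Types (rs : seq ('cV[K]_N * 'cV[K]_N)) (R : 'M[K]_N).

Lemma bracket_linl y : linear (br^~ y).
Proof. by move=> a x z; case: br_bilin => ->. Qed.

Lemma bracket_linr x : linear (br x).
Proof. by move=> a y z; case: br_bilin => _ ->. Qed.

Lemma bracket_comb I J (r : seq I) (s : seq J) a b x y :
  br (\sum_(i <- r) a i *: x i) (\sum_(j <- s) b j *: y j) =
  \sum_(i <- r) \sum_(j <- s) (a i * b j) *: br (x i) (y j).
Proof.
rewrite (lin_fun_comb (bracket_linl _)); apply: eq_bigr => i _.
rewrite (lin_fun_comb (bracket_linr _)) scaler_sumr.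
by apply: eq_bigr => j _; rewrite scalerA.
Qed.

Definition mybe_entry R (u v w : 'I_N) : K :=
  br (col v R) (col w R) u 0 + br (row u R)^T (col w R) v 0
  + br (row u R)^T (row v R)^T w 0.

Lemma MYBE_entryP rs :
  MYBE br rs <-> forall u v w, mybe_entry (tensor_of rs) u v w = 0.
Proof.
have sumE I J (r : seq I) (s : seq J) (c : I -> J -> K) (x : I -> J -> 'cV[K]_N) t :
    (\sum_(i <- r) \sum_(j <- s) c i j *: x i j) t 0
    = \sum_(i <- r) \sum_(j <- s) c i j * x i j t 0.
  by rewrite summxE; apply: eq_bigr => i _; rewrite summxE; apply: eq_bigr => j _; rewrite mxE.
rewrite /MYBE; have -> :
    \sum_(p <- rs) \sum_(q <- rs) tens3 (br p.1 q.1) p.2 q.2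
  + \sum_(p <- rs) \sum_(q <- rs) tens3 p.1 (br p.2 q.1) q.2
  + \sum_(p <- rs) \sum_(q <- rs) tens3 p.1 q.1 (br p.2 q.2)
  = [ffun t => mybe_entry (tensor_of rs) t.1.1 t.1.2 t.2].
  apply/ffunP => [[[u v] w]]; rewrite /mybe_entry !ffunE /= !sum_ffunE.
  rewrite !col_tensor_of !row_tensor_of !bracket_comb !sumE -!big_split /=.
  apply: eq_bigr => p _; rewrite !sum_ffunE -!big_split /=.
  by apply: eq_bigr => q _; rewrite !ffunE /=; ring.
split=> [/ffunP E u v w | E]; first by have := E (u, v, w); rewrite !ffunE.
by apply/ffunP => t; rewrite !ffunE E.
Qed.

Lemma mybe_entry_skew R u v w : R^T = - R ->
  mybe_entry R u v w =
  br (col v R) (col w R) u 0 - br (col u R) (col w R) v 0 + br (col u R) (col v R) w 0.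
Proof.
move=> R_skew; rewrite /mybe_entry !tr_row R_skew !linearN /=.
rewrite (lin_funN (bracket_linl _)) (lin_funN (bracket_linr _)) (lin_funN (bracket_linl _)).
by rewrite !oppmxE opprK.
Qed.

End BilinearBracket.

Section Coordinates.
Variables (K : fieldType) (n m : nat).

Lemma inA_lshift (x : 'cV[K]_n) c : @inA K n m x (lshift m c) 0 = x c 0.
Proof. by rewrite col_mxEu. Qed.

Lemma inA_rshift (x : 'cV[K]_n) a : @inA K n m x (rshift n a) 0 = 0.
Proof. by rewrite col_mxEd mxE. Qed.

Lemma inVd_lshift (x : 'cV[K]_m) c : @inVd K n m x (lshift m c) 0 = 0.
Proof. by rewrite col_mxEu mxE. Qed.

Lemma inVd_rshift (x : 'cV[K]_m) a : @inVd K n m x (rshift n a) 0 = x a 0.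
Proof. by rewrite col_mxEd. Qed.

Lemma inVd_linear : linear (@inVd K n m).
Proof. by move=> a x y; rewrite /inVd scale_col_mx add_col_mx scaler0 addr0. Qed.

End Coordinates.

Section SemidirectProduct.
Variables (K : fieldType) (n m : nat) (br : 'cV[K]_n -> 'cV[K]_n -> 'cV[K]_n)
  (rho : 'cV[K]_n -> 'M[K]_m).
Hypotheses (br_bilin : bilinear_bracket br) (rho_lin : linear rho).

Local Notation sbr := (semidirect_bracket br rho).

Lemma semidirect_bracket_bilinear : bilinear_bracket sbr.
Proof.
have [brl brr] := br_bilin.
split=> a x y z; rewrite /semidirect_bracket /dual_rep !linearP /= ?brl ?brr rho_lin;
  rewrite scale_col_mx add_col_mx; congr col_mx;
  rewrite !(linearD, linearZ) /= !(mulNmx, mulmxDl, mulmxDr) -?scalemxAl -?scalemxAr;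
  by rewrite ?(opprD, opprK, scalerN, scalerDr, scalerBr, mulNmx) addrACA.
Qed.

Lemma semidirect_bracket_inA x y : sbr (inA x) (inA y) = inA (br x y).
Proof. by rewrite /semidirect_bracket !col_mxKu !col_mxKd !mulmx0 subr0. Qed.

Lemma semidirect_bracket_inA_inVd x b :
  sbr (inA x) (inVd b) = inVd (- ((rho x)^T *m b)).
Proof.
rewrite /semidirect_bracket !col_mxKu !col_mxKd (lin_fun0 (bracket_linr br_bilin _)).
by rewrite mulmx0 subr0 /dual_rep mulNmx.
Qed.

Lemma semidirect_bracket_inVd_inA a y :
  sbr (inVd a) (inA y) = inVd ((rho y)^T *m a).
Proof.
rewrite /semidirect_bracket !col_mxKu !col_mxKd (lin_fun0 (bracket_linl br_bilin _)).
by rewrite mulmx0 sub0r /dual_rep mulNmx opprK.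
Qed.

Lemma semidirect_bracket_inVd a b : sbr (inVd a) (inVd b) = 0.
Proof.
rewrite /semidirect_bracket !col_mxKu !col_mxKd (lin_fun0 (bracket_linl br_bilin _)).
by rewrite /dual_rep (lin_fun0 rho_lin) trmx0 oppr0 !mul0mx subrr col_mx0.
Qed.

End SemidirectProduct.

Section TensorOfOperator.
Variables (K : fieldType) (n m : nat) (T : 'M[K]_(n, m)).

Local Notation tensT := (tensor_of (O_tensor T)).

Lemma tensor_of_r_of : tensor_of (r_of T) = tensT - tensT^T.
Proof.
rewrite -tensor_of_tswap /tensor_of /r_of big_cat /=; congr (_ + _).
by rewrite big_map -sumrN; apply: eq_bigr => p _; rewrite /tens2 mulNmx.
Qed.

Lemma r_of_skew : skew_symmetric (r_of T).
Proof.
by rewrite /skew_symmetric tensor_of_tswap tensor_of_r_of linearB /= trmxK opprB.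
Qed.

Lemma big_O_tensor (V : nmodType) (F : 'cV[K]_(n + m) * 'cV[K]_(n + m) -> V) :
  \sum_(p <- O_tensor T) F p = \sum_i F (inA (col i T), inVd (delta_mx i 0)).
Proof. by rewrite /O_tensor big_map big_enum /=; apply: eq_bigr => i _; rewrite colE. Qed.

Lemma col_r_of_rshift a : col (rshift n a) (tensor_of (r_of T)) = inA (col a T).
Proof.
rewrite tensor_of_r_of linearB /= -tr_row col_tensor_of row_tensor_of !big_O_tensor /=.
under eq_bigr => i _ do rewrite inVd_rshift.
under [X in _ - X]eq_bigr => i _ do rewrite inA_rshift scale0r.
by rewrite sum_delta_mx_scale big1 // subr0.
Qed.

Lemma col_r_of_lshift c :
  col (lshift m c) (tensor_of (r_of T)) = inVd (- (row c T)^T).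
Proof.
rewrite tensor_of_r_of linearB /= -tr_row col_tensor_of row_tensor_of !big_O_tensor /=.
under eq_bigr => i _ do rewrite inVd_lshift scale0r.
under [X in _ - X]eq_bigr => i _ do rewrite inA_lshift.
rewrite big1 // sub0r -(lin_fun_comb (@inVd_linear _ _ _)) (lin_funN (@inVd_linear _ _ _)).
by congr (- inVd _); rewrite [RHS]col_sum_delta; apply: eq_bigr => i _; rewrite !mxE.
Qed.

End TensorOfOperator.

Section OOperator.
Variables (K : fieldType) (n m : nat) (br : 'cV[K]_n -> 'cV[K]_n -> 'cV[K]_n)
  (rho : 'cV[K]_n -> 'M[K]_m) (T : 'M[K]_(n, m)).
Hypotheses (br_bilin : bilinear_bracket br) (rho_lin : linear rho).

Definition O_defect (a b : 'cV[K]_m) : 'cV[K]_n :=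
  br (T *m a) (T *m b) - T *m (rho (T *m a) *m b - rho (T *m b) *m a).

Lemma O_defect_linl b : linear (O_defect^~ b).
Proof.
move=> s x y; rewrite /O_defect !linearP /= (bracket_linl br_bilin) rho_lin.
rewrite !(mulmxDl, mulmxDr) -!(scalemxAl, scalemxAr) !(linearD, linearZ) /=.
by rewrite [RHS]addrACA [X in _ = _ + X]addrACA.
Qed.

Lemma O_defect_linr a : linear (O_defect a).
Proof.
move=> s x y; rewrite /O_defect !linearP /= (bracket_linr br_bilin) rho_lin.
rewrite !(mulmxDl, mulmxDr) -!(scalemxAl, scalemxAr) !(linearD, linearZ) /=.
by rewrite [RHS]addrACA [X in _ = _ + X]addrACA.
Qed.

Lemma O_operator_deltaP :
  O_operator br rho T <->
  forall a b c, O_defect (delta_mx a 0) (delta_mx b 0) c 0 = 0.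
Proof.
split=> [O_T a b c | O_e a b]; first by rewrite /O_defect O_T subrr mxE.
have O_defect0 x y : O_defect x y = 0.
  move: x; apply: (lin_fun_eq0_delta (O_defect_linl y)) => a'; move: y.
  apply: (lin_fun_eq0_delta (O_defect_linr _)) => b'.
  by apply/matrixP => c j; rewrite [j]ord1 O_e mxE.
by apply/eqP; rewrite -subr_eq0 -/(O_defect a b) O_defect0.
Qed.

Lemma O_defect_deltaE a b c :
  O_defect (delta_mx a 0) (delta_mx b 0) c 0 =
  br (col a T) (col b T) c 0 - (T *m rho (col a T)) c b + (T *m rho (col b T)) c a.
Proof.
rewrite /O_defect mulmxBr !mulmxA -!colE.
by rewrite !(addmxE, oppmxE) ![col _ _ _ _]mxE opprB addrA addrAC.
Qed.

Local Notation sbr := (semidirect_bracket br rho).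
Local Notation e i := (delta_mx i 0).

Lemma r_of_entry (x y z : 'I_n + 'I_m) :
  mybe_entry sbr (tensor_of (r_of T)) (unsplit x) (unsplit y) (unsplit z) =
  match x, y, z with
  | inr a, inr b, inl c | inl c, inr a, inr b => O_defect (e a) (e b) c 0
  | inr a, inl c, inr b => - O_defect (e a) (e b) c 0
  | _, _, _ => 0
  end.
Proof.
have sbr_bilin := semidirect_bracket_bilinear br_bilin rho_lin.
have r_skew : (tensor_of (r_of T))^T = - tensor_of (r_of T).
  by rewrite -tensor_of_tswap r_of_skew opprK.
rewrite mybe_entry_skew //.
case: x => [c|a]; case: y => [c'|b]; case: z => [c''|b'] /=;
  rewrite ?col_r_of_lshift ?col_r_of_rshift.
all: rewrite ?semidirect_bracket_inA ?semidirect_bracket_inA_inVd //.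
all: rewrite ?semidirect_bracket_inVd_inA ?semidirect_bracket_inVd //.
all: rewrite ?inA_lshift ?inA_rshift ?inVd_lshift ?inVd_rshift.
all: rewrite ?mulmxN ?oppmxE ?opprK ?mulmx_tr_row ?O_defect_deltaE.
all: first [by rewrite ?mxE subrr addr0 | ring].
Qed.

Lemma MYBE_r_ofP :
  MYBE sbr (r_of T) <-> forall a b c, O_defect (e a) (e b) c 0 = 0.
Proof.
have sbr_bilin := semidirect_bracket_bilinear br_bilin rho_lin.
split=> [/(MYBE_entryP sbr_bilin) MYBE_e a b c | O_e].
  have := MYBE_e (rshift n a) (rshift n b) (lshift m c).
  by rewrite (r_of_entry (inr a) (inr b) (inl c)).
apply/(MYBE_entryP sbr_bilin) => u v w.
rewrite -(splitK u) -(splitK v) -(splitK w) r_of_entry.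
by case: (split u) => ?; case: (split v) => ?; case: (split w) => ?; rewrite ?O_e ?oppr0.
Qed.

End OOperator.

Theorem theorem2p10 (K : fieldType) (hK : [pchar K] =i pred0) (n m : nat)
  (br : 'cV[K]_n -> 'cV[K]_n -> 'cV[K]_n) (rho : 'cV[K]_n -> 'M[K]_m)
  (T : 'M[K]_(n, m)) :
  malcev_algebra br -> malcev_rep br rho ->
  (O_operator br rho T <->
   (skew_symmetric (r_of T) /\ MYBE (semidirect_bracket br rho) (r_of T))).
Proof.
move=> [br_bilin _ _] [rho_lin _].
rewrite (O_operator_deltaP _ br_bilin rho_lin) (MYBE_r_ofP _ br_bilin rho_lin).
split=> [O_e | [_ O_e] //].
by split; [exact: r_of_skew | exact: O_e].
Qed.
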